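(* Let $M$ be a primary submonoid of a free commutative monoid (of arbitrary rank). Then $M$ has finite rank $d:=\mathrm{rank}(M)$, and $M$ is isomorphic to a submonoid of $(\mathbb{N}^d,+)$.
   Context: Convention: all monoids are commutative, cancellative, and reduced, written additively; $M^\bullet=M\setminus\{0\}$; $\mathrm{rank}(M)$ is the rank of the Grothendieck group $\mathrm{gp}(M)$ as a $\mathbb{Z}$-module. $M$ is primary if $M$ is nontrivial and for all $x,y\in M^\bullet$ there is $n\in\mathbb{N}$ with $ny\in x+M$. *)

From HB Require Import structures.
From mathcomp Require Import all_boot all_order all_algebra.
From Stdlib Require Import List.
Set Implicit Arguments. Unset Strict Implicit. Unset Printing Implicit Defensive.
Import Order.TTheory GRing.Theory Num.Theory.

(* The free commutative monoid on a set (type) I of generators is modelled as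
   the finitely supported functions I -> nat with pointwise addition.
   A submonoid of it is a predicate M on I -> nat. *)

Definition fin_supp (I : Type) (x : I -> nat) : Prop :=
  exists s : list I, forall i, ~ List.In i s -> x i = 0%N.

Definition zerof (I : Type) : I -> nat := fun _ => 0%N.
Definition addf (I : Type) (x y : I -> nat) : I -> nat := fun i => (x i + y i)%N.
Definition scalef (I : Type) (n : nat) (x : I -> nat) : I -> nat :=
  fun i => (n * x i)%N.

Definition submonoid_of_free (I : Type) (M : (I -> nat) -> Prop) : Prop :=
  (forall x, M x -> fin_supp x) /\
  M (@zerof I) /\
  (forall x y, M x -> M y -> M (addf x y)).

Definition nonzerof (I : Type) (x : I -> nat) : Prop := exists i, x i <> 0%N.

Definition primary (I : Type) (M : (I -> nat) -> Prop) : Prop :=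
  (exists x, M x /\ nonzerof x) /\
  (forall x y, M x -> nonzerof x -> M y -> nonzerof y ->
     exists n : nat, exists z, M z /\ forall i, scalef n y i = addf x z i).

(* Grothendieck group of M, realised inside Z^(I): differences a - b *)
Definition gp (I : Type) (M : (I -> nat) -> Prop) (g : I -> int) : Prop :=
  exists a b, M a /\ M b /\ forall i, g i = ((a i)%:Z - (b i)%:Z)%R.

Definition Z_lin_indep (I : Type) (k : nat) (g : 'I_k -> I -> int) : Prop :=
  forall c : 'I_k -> int,
    (forall i, (\sum_(j < k) c j * g j i)%R = 0%R) -> forall j, c j = 0%R.

Definition has_rank (I : Type) (M : (I -> nat) -> Prop) (d : nat) : Prop :=
  (exists g : 'I_d -> I -> int, (forall j, gp M (g j)) /\ Z_lin_indep g) /\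
  (forall (k : nat) (g : 'I_k -> I -> int),
     (forall j, gp M (g j)) -> Z_lin_indep g -> (k <= d)%N).

(* M is isomorphic to a submonoid of (N^d, +): there is a monoid
   homomorphism from M to N^d that is injective (the image is then a
   submonoid of N^d and phi an isomorphism onto it). *)
Definition embeds_in_Nd (I : Type) (M : (I -> nat) -> Prop) (d : nat) : Prop :=
  exists phi : (I -> nat) -> 'I_d -> nat,
    (forall j, phi (@zerof I) j = 0%N) /\
    (forall x y, M x -> M y -> forall j, phi (addf x y) j = (phi x j + phi y j)%N) /\
    (forall x y, M x -> M y -> (forall j, phi x j = phi y j) -> forall i, x i = y i).

From mathcomp Require Import all_boot all_order all_algebra.
From Stdlib Require Import List Classical.
Import GRing.Theory.
Set Implicit Arguments. Unset Strict Implicit.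
Local Open Scope ring_scope.

(* If x is a nonzero element of a primary M, every y in M satisfies
   n x = y + z for some n and z in M, so the support of y lies in the finite
   support s of x.  Hence gp(M) lives in Z^s: every Z-independent family in
   gp(M) is Q-independent as a family of vectors of Q^s, so its size is at
   most |s|, and a maximal one g exists, of size d = rank(M).  Pick d
   coordinates of s on which the d x d minor of g is invertible.  Projection
   onto those coordinates is injective on M: if x, y in M agree there, then
   x - y is a rational combination of g (by maximality), whose coefficients
   vanish because the minor is invertible. *)

Lemma primary_supp_subset (I : Type) (M : (I -> nat) -> Prop) (x : I -> nat) :
  primary M -> M x -> nonzerof x ->
  forall y, M y -> forall i, x i = 0%N -> y i = 0%N.
Proof.
move=> [_ hprim] hx hnx y hy i hxi.
have [hny | hy0] := classic (nonzerof y); last first.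
  by apply: NNPP => hyi; apply: hy0; exists i.
have [n [z [_ e]]] := hprim y x hy hny hx hnx.
have /esym/eqP := e i; rewrite /scalef /addf hxi muln0 addn_eq0.
by case/andP => /eqP.
Qed.

Lemma size_length (T : Type) (s : list T) : size s = length s.
Proof. by elim: s => //= a s ->. Qed.

Lemma In_nth_ord (T : Type) (s : list T) (i0 i : T) :
  List.In i s -> exists l : 'I_(size s), List.nth l s i0 = i.
Proof.
move=> /(@List.In_nth T s i i0) [n [/ltP hn e]].
by rewrite -size_length in hn; exists (Ordinal hn).
Qed.

Lemma rat_row_clear_denominators (k : nat) (v : 'rV[rat]_k) :
  exists (c : 'I_k -> int) (D : int), D != 0 /\
    forall j, (c j)%:~R = v 0 j * D%:~R.
Proof.
exists (fun j => numq (v 0 j) * \prod_(l | l != j) denq (v 0 l)).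
exists (\prod_l denq (v 0 l)); split.
  by apply/prodf_neq0 => l _; apply: denq_neq0.
by move=> j; rewrite [in RHS](bigD1 j) //= !intrM numqE mulrA.
Qed.

Lemma ex_max_bounded (P : nat -> Prop) (n : nat) :
  P 0%N -> (forall k, P k -> (k <= n)%N) ->
  exists d, P d /\ forall k, P k -> (k <= d)%N.
Proof.
elim: n => [|n IHn] hP0 hle; first by exists 0%N.
have [hPn | hnPn] := classic (P n.+1); first by exists n.+1.
apply: IHn => // k hk; rewrite -ltnS ltn_neqAle hle // andbT.
by apply/eqP => ek; apply: hnPn; rewrite -ek.
Qed.

Lemma not_Z_lin_indep (I : Type) (k : nat) (g : 'I_k -> I -> int) :
  ~ Z_lin_indep g ->
  exists2 c : 'I_k -> int,
    forall i, \sum_(j < k) c j * g j i = 0 & exists j, c j <> 0.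
Proof.
move=> hdep; apply: NNPP => hno; apply: hdep => c hc j.
by apply: NNPP => hcj; apply: hno; exists c => //; exists j.
Qed.

Section FamilyOnFiniteSupport.

Variables (I : Type) (s : list I) (i0 : I).

Definition supp_mx (k : nat) (g : 'I_k -> I -> int) : 'M[rat]_(k, size s) :=
  \matrix_(j, l) (g j (List.nth l s i0))%:~R.

Definition supported_on (g : I -> int) := forall i, ~ List.In i s -> g i = 0.

Lemma Z_lin_indep_row_free (k : nat) (g : 'I_k -> I -> int) :
  (forall j, supported_on (g j)) -> Z_lin_indep g -> row_free (supp_mx g).
Proof.
move=> hs hind; apply: inj_row_free => v hv.
have [c [D [hD hc]]] := rat_row_clear_denominators v.
have hz i : \sum_(j < k) c j * g j i = 0.
  have [hi | hi] := classic (List.In i s); last first.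
    by apply: big1 => j _; rewrite hs // mulr0.
  have [l <-] := In_nth_ord i0 hi.
  apply: (@intr_inj rat); rewrite rmorph_sum rmorph0 /=.
  have := congr1 (fun A : 'M[rat]_(1, size s) => A 0 l) hv; rewrite !mxE => e.
  rewrite -[RHS](mulr0 (D%:~R : rat)) -[in RHS]e mulr_sumr; apply: eq_bigr => j _.
  by rewrite intrM hc !mxE -mulrA mulrCA.
apply/rowP => j; have := hc j; rewrite (hind c hz j) mxE rmorph0 => /esym/eqP.
by rewrite mulf_eq0 intr_eq0 (negPf hD) orbF => /eqP.
Qed.

Lemma Z_lin_indep_size_le (k : nat) (g : 'I_k -> I -> int) :
  (forall j, supported_on (g j)) -> Z_lin_indep g -> (k <= size s)%N.
Proof.
move=> hs /(Z_lin_indep_row_free hs) /eqP <-; exact: rank_leq_col.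
Qed.

Definition extend_family (k : nat) (g : 'I_k -> I -> int) (h : I -> int) :
    'I_k.+1 -> I -> int :=
  fun j => if unlift ord_max j is Some j' then g j' else h.

Lemma sum_extend_family (k : nat) (c : 'I_k.+1 -> int) g h i :
  \sum_(j < k.+1) c j * extend_family g h j i =
  \sum_(j < k) c (lift ord_max j) * g j i + c ord_max * h i.
Proof.
rewrite big_ord_recr /extend_family /= unlift_none; congr (_ + _).
apply: eq_bigr => j _.
have -> : widen_ord (leqnSn k) j = lift ord_max j.
  by apply: val_inj; rewrite /= /bump leqNgt ltn_ord.
by rewrite liftK.
Qed.

Lemma extend_family_dep_eq0 (k : nat) (g : 'I_k -> I -> int)
    (f : 'I_k -> 'I_(size s)) (h : I -> int) :
  rowsub f (supp_mx g)^T \in unitmx ->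
  (forall j, h (List.nth (f j) s i0) = 0) ->
  ~ Z_lin_indep (extend_family g h) -> forall i, h i = 0.
Proof.
move=> hunit hf /not_Z_lin_indep [c hc [j0 hj0]].
have {}hc i : \sum_(j < k) c (lift ord_max j) * g j i + c ord_max * h i = 0.
  by rewrite -sum_extend_family.
pose cv : 'rV[rat]_k := \row_j (c (lift ord_max j))%:~R.
have hcv : cv *m (rowsub f (supp_mx g)^T)^T = 0.
  apply/rowP => l; have := hc (List.nth (f l) s i0).
  rewrite hf mulr0 addr0 !mxE => /(congr1 (fun z : int => z%:~R : rat)).
  rewrite rmorph_sum rmorph0 /= => e; rewrite -[in RHS]e.
  by apply: eq_bigr => j _; rewrite !mxE intrM.
have hcv0 : cv = 0.
  apply/eqP; rewrite -(mulmx_free_eq0 _ (B := (rowsub f (supp_mx g)^T)^T)) ?hcv //.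
  by rewrite row_free_unit unitmx_tr.
have hcl j : c (lift ord_max j) = 0.
  have := congr1 (fun A : 'rV[rat]_k => A 0 j) hcv0; rewrite !mxE.
  by move/eqP; rewrite intr_eq0 => /eqP.
have hcm : c ord_max <> 0.
  by case: (unliftP ord_max j0) hj0 => [j ->|->] //; rewrite hcl.
move=> i; have := hc i; rewrite big1 ?add0r => [|j _]; last by rewrite hcl mul0r.
by move/eqP; rewrite mulf_eq0 => /orP[/eqP //| /eqP].
Qed.

End FamilyOnFiniteSupport.

Theorem mainTheorem14 (I : Type) (M : (I -> nat) -> Prop) :
  submonoid_of_free M -> primary M ->
  exists d : nat, has_rank M d /\ embeds_in_Nd M d.
Proof.
move=> [hsupp _] hprimary; have [[x0 [hx0 hnx0]] _] := hprimary.
have [s hs] := hsupp x0 hx0; have [i0 _] := hnx0.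
have hgp g : gp M g -> supported_on s g.
  move=> [a [b [ha [hb e]]]] i hi.
  by rewrite e !(primary_supp_subset hprimary hx0 hnx0 _ (hs i hi)).
pose P k := exists g : 'I_k -> I -> int, (forall j, gp M (g j)) /\ Z_lin_indep g.
have [d [[g [hg hind]] hmax]] : exists d, P d /\ forall k, P k -> (k <= d)%N.
  apply: (@ex_max_bounded P (size s)).
    by exists (fun _ _ => 0); split=> [[]|c _ []].
  by move=> k [g [hg hi]]; apply: (Z_lin_indep_size_le i0 (fun j => hgp _ (hg j)) hi).
exists d; split; first by split=> [|k g' hg' hi']; [exists g | apply: hmax; exists g'].
have hfull : row_full (supp_mx s i0 g)^T.
  rewrite /row_full mxrank_tr.
  exact: Z_lin_indep_row_free (fun j => hgp _ (hg j)) hind.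
pose f := fullrankfun hfull.
exists (fun x j => x (List.nth (f j) s i0)); do 2!split=> //.
move=> x y hx hy hxy i; apply/eqP; rewrite -eqz_nat -subr_eq0; apply/eqP.
pose h i := (x i)%:Z - (y i)%:Z.
apply: (@extend_family_dep_eq0 _ s i0 _ g f h (fullrowsub_unit hfull)) => [j|hi'].
  by rewrite /h hxy subrr.
suff /hmax : P d.+1 by rewrite ltnn.
exists (extend_family g h); split=> // j; rewrite /extend_family.
by case: unlift => [j'|]; [apply: hg | exists x, y].
Qed.
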